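(* Let $\mathcal{P}$ be a probability distribution on $\mathbb{R}^d$ whose support is contained in the unit ball $\{\mathbf{z}:\|\mathbf{z}\|\le 1\}$, let $\varphi:\mathbb{R}\to\mathbb{R}$ be twice differentiable with $|\varphi''(\alpha)|\le c\,|\varphi'(\alpha)|$ for all $\alpha$, for some constant $c>0$, and let $f(\mathbf{w})=\mathbb{E}_{\mathbf{z}\sim\mathcal{P}}[\varphi(\mathbf{w}^\top\mathbf{z})]$ with stochastic gradients $\nabla f_{\mathbf{z}}(\mathbf{w})=\varphi'(\mathbf{w}^\top\mathbf{z})\,\mathbf{z}$ (so that $\nabla^2 f(\mathbf{w})=\mathbb{E}_{\mathbf{z}}[\varphi''(\mathbf{w}^\top\mathbf{z})\mathbf{z}\mathbf{z}^\top]$). Let $\mathbf{w}\in\mathbb{R}^d$ and let $\mathbf{v}$ be a unit-length eigenvector of $\nabla^2 f(\mathbf{w})$ with eigenvalue $\lambda<0$. Then $\mathbb{E}_{\mathbf{z}}[(\nabla f_{\mathbf{z}}(\mathbf{w})^\top\mathbf{v})^2]\ge(\lambda/c)^2$. *)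

From HB Require Import structures.
From mathcomp Require Import all_boot all_order all_algebra.
From mathcomp Require Import all_classical all_reals all_analysis.
Set Implicit Arguments. Unset Strict Implicit. Unset Printing Implicit Defensive.
Import Order.TTheory GRing.Theory Num.Theory.
Local Open Scope ring_scope.

(* Points z of R^d are d-tuples (measurable structure = product / Borel
   sigma-algebra of R^d); parameter vectors w, v are row vectors 'rV_d. *)

Definition dotz {R : realType} {d : nat} (w : 'rV[R]_d) (z : d.-tuple R) : R :=
  \sum_(i < d) w 0 i * tnth z i.

Definition sqnormz {R : realType} {d : nat} (z : d.-tuple R) : R :=
  \sum_(i < d) tnth z i ^+ 2.

Definition sqnormv {R : realType} {d : nat} (v : 'rV[R]_d) : R :=
  \sum_(i < d) v 0 i ^+ 2.

Definition hessf {R : realType} {d : nat} (P : probability (d.-tuple R) R)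
  (phi'' : R -> R) (w : 'rV[R]_d) : 'M[R]_d :=
  \matrix_(i < d, j < d)
     fine (\int[P]_z (phi'' (dotz w z) * tnth z i * tnth z j)%:E).

From HB Require Import structures.
From mathcomp Require Import all_boot all_order all_algebra.
From mathcomp Require Import all_classical all_reals all_analysis.
From mathcomp Require Import ring lra.
Import Order.TTheory GRing.Theory Num.Theory.
Import measurable_realfun numFieldNormedType.Exports.
Set Implicit Arguments. Unset Strict Implicit. Unset Printing Implicit Defensive.
Local Open Scope ring_scope.
Local Open Scope classical_set_scope.

(* Since v is a unit eigenvector, lambda = v^T (Hess f)(w) v = E[phi''(w^T z) (v^T z)^2];
   this exchange of the quadratic form with the expectation is legitimate because
   |phi''| <= c |phi'| is bounded on the bounded range of w^T z over the unit ball.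
   As |v^T z| <= 1 there, |lambda| <= c E[|h|] with h z = phi'(w^T z) v^T z, and
   integrating 2 |a| |h| <= h^2 + a^2 for a = lambda / c yields a^2 <= E[h^2]. *)

Section derivative.
Variable R : realType.

Lemma derivable1_continuous (f : R -> R) :
  (forall a, derivable f a 1) -> continuous f.
Proof. by move=> df x; apply: differentiable_continuous; exact/derivable1_diffP. Qed.

Lemma measurable_derive1 (f : R -> R) :
  (forall a, derivable f a 1) -> measurable_fun setT (derive1 f).
Proof.
move=> df; have cf := derivable1_continuous df.
(* f' is the pointwise limit of the measurable difference quotients along h = 1 / n.+1. *)
pose q (n : nat) x := (harmonic n : R)^-1 * (f (harmonic n + x) - f x).
apply: (measurable_fun_cvg (h := q)) => [n|x _].
  apply: measurable_funM => //; apply: measurable_funB; last exact: continuous_measurable_fun.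
  apply: (measurableT_comp (continuous_measurable_fun cf)).
  exact: measurable_funD.
have quot_cvg : (fun h : R => h^-1 *: ((f \o shift x) (h *: 1) - f x)) @ 0^'+ --> derive1 f x.
  have right_sub : (0 : R)^'+ `=>` 0^' by apply: within_subset => h /= /gt_eqF ->.
  by rewrite derive1E; exact: cvg_trans (cvg_app _ right_sub) (df x).
have -> : q ^~ x = fun n => (harmonic n)^-1 *: ((f \o shift x) (harmonic n)%:A - f x).
  by apply: funext => n; rewrite /q /= [_ *: 1]mulr1 addrC.
move/cvg_at_rightP: quot_cvg; apply; split; last exact: cvg_harmonic.
by move=> n; rewrite /harmonic /= invr_gt0 ltr0n.
Qed.

End derivative.

Section dot_products.
Variables (R : realType) (d : nat).
Implicit Types (w v : 'rV[R]_d) (z : d.-tuple R).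

Lemma measurable_dotz w : measurable_fun setT (dotz w).
Proof. by apply: measurable_sum => i; apply: measurable_funM => //; exact: measurable_tnth. Qed.

Lemma measurable_sqnormz : measurable_fun setT (@sqnormz R d).
Proof. by apply: measurable_sum => i; apply: measurable_funX; exact: measurable_tnth. Qed.

Lemma sqr_tnth_le_sqnormz z i : tnth z i ^+ 2 <= sqnormz z.
Proof.
rewrite /sqnormz (bigD1 i) //= lerDl.
by apply: sumr_ge0 => j _; exact: sqr_ge0.
Qed.

Lemma norm_tnth_le1 z i : sqnormz z <= 1 -> `|tnth z i| <= 1.
Proof.
move=> /(le_trans (sqr_tnth_le_sqnormz z i)).
by rewrite -real_normK ?num_real // expr_le1.
Qed.

Lemma norm_dotz_le_avg v z : `|dotz v z| <= (sqnormv v + sqnormz z) / 2.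
Proof.
rewrite /dotz /sqnormv /sqnormz -big_split mulr_suml /=.
apply: le_trans (ler_norm_sum _ _ _) _; apply: ler_sum => i _.
rewrite normrM -[v 0 i ^+ 2]real_normK ?num_real // -[tnth z i ^+ 2]real_normK ?num_real //.
have := sqr_ge0 (`|v 0 i| - `|tnth z i|); nra.
Qed.

Lemma norm_dotz_le1 v z : sqnormv v = 1 -> sqnormz z <= 1 -> `|dotz v z| <= 1.
Proof. by move=> hv hz; apply: le_trans (norm_dotz_le_avg v z) _; rewrite hv; lra. Qed.

Lemma norm_dotz_le_l1 w z : sqnormz z <= 1 -> `|dotz w z| <= \sum_i `|w 0 i|.
Proof.
move=> hz; apply: le_trans (ler_norm_sum _ _ _) _; apply: ler_sum => i _.
by rewrite normrM ler_piMr // norm_tnth_le1.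
Qed.

Lemma continuous_dotz_bounded (g : R -> R) w : continuous g ->
  exists M, forall z, sqnormz z <= 1 -> `|g (dotz w z)| <= M.
Proof.
move=> cg; pose W := \sum_i `|w 0 i|.
have [t0 _ max_t0] : exists2 t0, t0 \in `[-W, W]%R &
    forall t, t \in `[-W, W]%R -> `|g t| <= `|g t0|.
  apply: (@EVT_max R (fun t => `|g t|)).
    by have : 0 <= W := sumr_ge0 _ (fun i _ => normr_ge0 _); lra.
  apply: continuous_subspaceT => t.
  exact: continuous_comp (cg t) (@norm_continuous _ R _).
exists `|g t0| => z hz; apply: max_t0.
by rewrite in_itv /= -ler_norml; exact: norm_dotz_le_l1.
Qed.

Lemma eigen_quadratic_form (A : 'M[R]_d) v lambda :
  A *m v^T = lambda *: v^T ->
  \sum_i \sum_j v 0 i * v 0 j * A i j = lambda * sqnormv v.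
Proof.
move=> eig; rewrite /sqnormv mulr_sumr; apply: eq_bigr => i _.
have := congr1 (fun B : 'M[R]_(d, 1) => B i 0) eig; rewrite !mxE => row_i.
rewrite expr2 mulrCA -row_i mulr_sumr; apply: eq_bigr => j _; rewrite mxE; ring.
Qed.

End dot_products.

Section second_moment.
Context d (T : measurableType d) (R : realType) (P : probability T R).

Lemma sqr_le_integral_sqr (h : T -> R) (a : R) :
  measurable_fun setT h -> (`|a|%:E <= \int[P]_x `|h x|%:E)%E ->
  ((a ^+ 2)%:E <= \int[P]_x (h x ^+ 2)%:E)%E.
Proof.
move=> mh a_le.
have amgm x : 2 * `|a| * `|h x| <= h x ^+ 2 + a ^+ 2.
  rewrite -[h x ^+ 2]real_normK ?num_real // -[a ^+ 2]real_normK ?num_real //.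
  by have := sqr_ge0 (`|h x| - `|a|); nra.
have mabs : measurable_fun setT (fun x => `|h x|).
  exact: measurableT_comp (@normr_measurable R setT) mh.
have sqr_ge0E (r : R) : (0 <= (r ^+ 2)%:E)%E by rewrite lee_fin sqr_ge0.
have integralD_cst : (\int[P]_x ((h x ^+ 2)%:E + (a ^+ 2)%:E) =
    \int[P]_x (h x ^+ 2)%:E + (a ^+ 2)%:E)%E.
  rewrite ge0_integralD //; last exact/measurable_EFinP/measurable_funX.
  by rewrite integral_cst // [X in (_ * X)%E]probability_setT mule1.
rewrite -(@leeD2rE _ (a ^+ 2)%:E) // -EFinD -integralD_cst.
have -> : a ^+ 2 + a ^+ 2 = 2 * `|a| * `|a|.
  by rewrite -mulrA -expr2 real_normK ?num_real //; ring.
rewrite EFinM (le_trans (lee_wpmul2l _ a_le)) ?lee_fin ?mulr_ge0 //.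
rewrite -ge0_integralZl_EFin //; last by apply/measurable_EFinP.
apply: ge0_le_integral => //.
- by apply: measurable_funeM; apply/measurable_EFinP.
- by apply: emeasurable_funD => //; apply/measurable_EFinP/measurable_funX.
- by move=> x _; rewrite -EFinM -EFinD lee_fin amgm.
Qed.

End second_moment.

Section unit_ball_support.
Variables (R : realType) (d : nat) (P : probability (d.-tuple R) R).
Hypothesis hsupp : P [set z | 1 < sqnormz z] = 0%E.

Lemma ae_unit_ball (Q : d.-tuple R -> Prop) :
  (forall z, sqnormz z <= 1 -> Q z) -> \forall z \ae P, Q z.
Proof.
move=> ballQ; exists [set z | 1 < sqnormz z]; split => //.
- have := @measurable_sqnormz R d measurableT _ (measurable_itv `]1, +oo[%R).
  by rewrite setTI; congr measurable; apply/seteqP; split => z /=; rewrite in_itv /= andbT.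
- by move=> z /= notQ; rewrite ltNge; apply/negP => /ballQ.
Qed.

Lemma integrable_hessf_entry (g : R -> R) (w : 'rV[R]_d) (M : R) i j :
  measurable_fun setT g -> (forall z, sqnormz z <= 1 -> `|g (dotz w z)| <= M) ->
  P.-integrable setT (fun z => (g (dotz w z) * tnth z i * tnth z j)%:E).
Proof.
move=> mg gM.
have mf : measurable_fun setT (fun z => g (dotz w z) * tnth z i * tnth z j).
  apply: measurable_funM; last exact: measurable_tnth.
  apply: measurable_funM; last exact: measurable_tnth.
  exact: measurableT_comp mg (measurable_dotz w).
apply/integrableP; split; first exact/measurable_EFinP.
apply: (@le_lt_trans _ _ (\int[P]_z `|M|%:E)%E).
  apply: ae_ge0_le_integral => //.
  - exact: measurableT_comp (@abse_measurable R setT) ((measurable_EFinP _ _).2 mf).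
  - apply: ae_unit_ball => z hz _; rewrite abse_EFin lee_fin !normrM.
    rewrite -[`|M|]mulr1 -[`|M| * 1]mulr1.
    by rewrite !ler_pM ?normr_ge0 ?mulr_ge0 ?norm_tnth_le1 // (le_trans (gM z hz)) ?ler_norm.
by rewrite integral_cst // [X in (_ * X)%E]probability_setT mule1 ltry.
Qed.

Lemma hessf_quadratic_form (g : R -> R) (w v : 'rV[R]_d) (M : R) :
  measurable_fun setT g -> (forall z, sqnormz z <= 1 -> `|g (dotz w z)| <= M) ->
  ((\sum_i \sum_j v 0 i * v 0 j * hessf P g w i j)%:E =
     \int[P]_z (g (dotz w z) * dotz v z ^+ 2)%:E)%E.
Proof.
move=> mg gM; pose f i j z := g (dotz w z) * tnth z i * tnth z j.
have intvf i j : P.-integrable setT (fun z => (v 0 i * v 0 j * f i j z)%:E).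
  under eq_fun do rewrite EFinM.
  exact/integrableZl/(integrable_hessf_entry _ _ mg gM).
have expand z : (g (dotz w z) * dotz v z ^+ 2)%:E =
    (\sum_i \sum_j (v 0 i * v 0 j * f i j z)%:E)%E.
  under [RHS]eq_bigr do rewrite sumEFin.
  rewrite sumEFin /dotz expr2 mulr_suml mulr_sumr; congr EFin; apply: eq_bigr => i _.
  rewrite !mulr_sumr; apply: eq_bigr => j _; rewrite /f; ring.
under eq_integral do rewrite expand.
rewrite integral_sum //; last first.
  by move=> i; apply: integrable_sum => // j _; exact: intvf.
rewrite -sumEFin; apply: eq_bigr => i _.
rewrite integral_sum // -sumEFin; apply: eq_bigr => j _.
under eq_integral do rewrite EFinM.
rewrite (integralZl measurableT (integrable_hessf_entry _ _ mg gM)).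
rewrite EFinM /hessf mxE fineK //.
exact: integrable_fin_num measurableT _ (integrable_hessf_entry _ _ mg gM).
Qed.

Lemma abse_integral_sqr_dotz_le (g1 g2 : R -> R) (c : R) (w v : 'rV[R]_d) :
  measurable_fun setT g1 -> measurable_fun setT g2 -> 0 <= c ->
  (forall a, `|g2 a| <= c * `|g1 a|) -> sqnormv v = 1 ->
  (`| \int[P]_z (g2 (dotz w z) * dotz v z ^+ 2)%:E | <=
     c%:E * \int[P]_z `|g1 (dotz w z) * dotz v z|%:E)%E.
Proof.
move=> mg1 mg2 c0 g21 hv.
have mw := measurable_dotz w; have mv := measurable_dotz v.
have mF : measurable_fun setT (fun z => g2 (dotz w z) * dotz v z ^+ 2).
  by apply: measurable_funM; [exact: measurableT_comp | exact: measurable_funX].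
have mG : measurable_fun setT (fun z => `|g1 (dotz w z) * dotz v z|).
  apply: measurableT_comp (@normr_measurable R setT) _.
  by apply: measurable_funM => //; exact: measurableT_comp.
apply: le_trans (le_abse_integral _ measurableT ((measurable_EFinP _ _).2 mF)) _.
rewrite -ge0_integralZl_EFin //; last exact/measurable_EFinP.
apply: ae_ge0_le_integral => //.
- exact: measurableT_comp (@abse_measurable R setT) ((measurable_EFinP _ _).2 mF).
- by move=> z _; rewrite -EFinM lee_fin mulr_ge0.
- by apply: measurable_funeM; exact/measurable_EFinP.
- apply: ae_unit_ball => z hz _; rewrite abse_EFin -EFinM lee_fin !normrM.
  have U1 := norm_dotz_le1 hv hz.
  apply: (@le_trans _ _ (`|g2 (dotz w z)| * `|dotz v z|)).
    by rewrite ler_wpM2l ?normr_ge0 ?ler_piMl.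
  by rewrite mulrA ler_wpM2r ?normr_ge0.
Qed.

End unit_ball_support.

Theorem lemma4 (R : realType) (d : nat) (P : probability (d.-tuple R) R)
  (phi : R -> R) (c : R)
  (hsupp : P [set z | 1 < sqnormz z] = 0%E)
  (hd1 : forall a : R, derivable phi a 1)
  (hd2 : forall a : R, derivable (derive1 phi) a 1)
  (hc : 0 < c)
  (hphi : forall a : R, `|(derive1 (derive1 phi)) a| <= c * `|(derive1 phi) a|)
  (w v : 'rV[R]_d) (lambda : R)
  (hv : sqnormv v = 1)
  (heig : hessf P (derive1 (derive1 phi)) w *m v^T = lambda *: v^T)
  (hlam : lambda < 0) :
  (((lambda / c) ^+ 2)%:E <=
     \int[P]_z ((((derive1 phi) (dotz w z)) * dotz v z) ^+ 2)%:E)%E.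
Proof.
set p1 := derive1 phi in hd2 hphi heig *.
set p2 := derive1 p1 in hphi heig *.
have cp1 : continuous p1 := derivable1_continuous hd2.
have mp1 : measurable_fun setT p1 := continuous_measurable_fun cp1.
have mp2 : measurable_fun setT p2 := measurable_derive1 hd2.
have [M p2_bounded] : exists M, forall z, sqnormz z <= 1 -> `|p2 (dotz w z)| <= M.
  have [M p1_bounded] := continuous_dotz_bounded w cp1.
  exists (c * M) => z /p1_bounded p1M.
  by apply: le_trans (hphi _) _; rewrite ler_pM2l.
have lambdaE : lambda%:E = (\int[P]_z (p2 (dotz w z) * dotz v z ^+ 2)%:E)%E.
  rewrite -(hessf_quadratic_form hsupp v mp2 p2_bounded).
  by rewrite (eigen_quadratic_form heig) hv mulr1.
apply: sqr_le_integral_sqr.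
  apply: measurable_funM; last exact: measurable_dotz.
  exact: measurableT_comp (measurable_dotz w).
rewrite normrM normfV (gtr0_norm hc) mulrC EFinM lee_pdivrMl // -abse_EFin lambdaE.
exact (abse_integral_sqr_dotz_le hsupp w mp1 mp2 (ltW hc) hphi hv).
Qed.
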